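(* Assume the standing setting and condition (C) described in the context. Let $(\theta_n)_{n\ge0}$ be a nondecreasing sequence of $\mathbb{G}$-stopping times tending to infinity. Then there exists a nondecreasing sequence $(\sigma_n)_{n\ge0}$ of $\mathbb{F}$-stopping times tending to infinity such that $\theta_n\wedge T\wedge\tau=\sigma_n\wedge T\wedge\tau$ for all $n$.
   Context: Standing setting: $(\Omega,\mathcal{A},\mathbb{Q})$ is a probability space, $\mathbb{G}=(\mathfrak{G}_t)_{t\ge0}$ a filtration satisfying the usual conditions, $\mathbb{F}=(\mathfrak{F}_t)_{t\ge0}$ a subfiltration of $\mathbb{G}$ satisfying the usual conditions, and $\tau$ a strictly positive (possibly infinite) $\mathbb{G}$-stopping time such that for every $t\ge0$ and $B\in\mathfrak{G}_t$ there is $B'\in\mathfrak{F}_t$ with $B\cap\{t<\tau\}=B'\cap\{t<\tau\}$. For a càdlàg process $X$, $X^{\tau-}=X1_{[0,\tau)}+X_{\tau-}1_{[\tau,\infty)}$. A constant $T>0$ is fixed. Condition (C): (a) $\tau$ has a $(\mathbb{G},\mathbb{Q})$ intensity $\gamma1_{(0,\tau]}$ with $\gamma$ nonnegative $\mathbb{F}$-predictable; (b) $S_t=\mathbb{Q}(\tau>t\mid\mathfrak{F}_t)$ satisfies $S_T>0$ a.s.; (c) there is a probability measure $\mathbb{P}$ equivalent to $\mathbb{Q}$ on $\mathfrak{F}_T$ such that for every $(\mathbb{F},\mathbb{P})$ local martingale $P$, $P^{\tau-}$ is a $(\mathbb{G},\mathbb{Q})$ local martingale on $[0,T]$. *)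

From HB Require Import structures.
From mathcomp Require Import all_boot all_order all_algebra.
From mathcomp Require Import all_classical all_reals all_analysis.
Set Implicit Arguments. Unset Strict Implicit. Unset Printing Implicit Defensive.
Import Order.TTheory GRing.Theory Num.Theory.
Import numFieldNormedType.Exports.
Local Open Scope classical_set_scope.
Local Open Scope ring_scope.

Section Stoch.
Context {R : realType} {d : measure_display} {Omega : measurableType d}.

(* A continuous-time filtration: F t is a sub-sigma-algebra of the ambient one,
   indexed by t >= 0 (values at t < 0 are irrelevant). *)
Definition filtration (F : R -> set (set Omega)) : Prop :=
  (forall t, 0 <= t -> sigma_algebra setT (F t) /\ (F t `<=` measurable)) /\
  (forall s t, 0 <= s -> s <= t -> F s `<=` F t).

Definition usual_conditions (Q : probability Omega R) (F : R -> set (set Omega)) : Prop :=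
  filtration F /\
  (forall t, 0 <= t -> forall A, (forall u, t < u -> F u A) -> F t A) /\
  (forall N, (exists M, measurable M /\ Q M = 0%E /\ N `<=` M) -> F 0 N).

Definition subfiltration (F G : R -> set (set Omega)) : Prop :=
  forall t, 0 <= t -> F t `<=` G t.

Definition stopping_time (F : R -> set (set Omega)) (th : Omega -> \bar R) : Prop :=
  (forall w, (0 <= th w)%E) /\
  (forall t, 0 <= t -> F t [set w | (th w <= t%:E)%E]).

Definition measurable_wrt (A : set (set Omega)) (X : Omega -> R) : Prop :=
  forall B : set R, measurable B -> A (X @^-1` B).

Definition adapted (F : R -> set (set Omega)) (X : R -> Omega -> R) : Prop :=
  forall t, 0 <= t -> measurable_wrt (F t) (X t).

Definition cadlag_path (f : R -> R) : Prop :=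
  (forall t, 0 <= t -> f x @[x --> t^'+] --> f t) /\
  (forall t, 0 < t -> cvg (f x @[x --> t^'-])).

Definition is_condexp (P : probability Omega R) (A : set (set Omega))
    (X Y : Omega -> R) : Prop :=
  measurable_wrt A Y /\ P.-integrable setT (fun w => (Y w)%:E) /\
  forall B, A B -> (\int[P]_(w in B) (Y w)%:E = \int[P]_(w in B) (X w)%:E)%E.

Definition martingale (F : R -> set (set Omega)) (P : probability Omega R)
    (M : R -> Omega -> R) : Prop :=
  adapted F M /\
  (forall t, 0 <= t -> P.-integrable setT (fun w => (M t w)%:E)) /\
  (forall s t, 0 <= s -> s <= t -> forall B, F s B ->
     (\int[P]_(w in B) (M t w)%:E = \int[P]_(w in B) (M s w)%:E)%E).

Definition stopped (X : R -> Omega -> R) (th : Omega -> \bar R) : R -> Omega -> R :=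
  fun t w => X (fine (Order.min t%:E (th w))) w.

Definition local_martingale (F : R -> set (set Omega)) (P : probability Omega R)
    (M : R -> Omega -> R) : Prop :=
  {ae P, forall w, cadlag_path (fun t => M t w)} /\ adapted F M /\
  exists Tn : nat -> Omega -> \bar R,
    (forall n, stopping_time F (Tn n)) /\
    (forall n w, (Tn n w <= Tn n.+1 w)%E) /\
    {ae P, forall w, (fun n => Tn n w) @ \oo --> +oo%E} /\
    (forall n, martingale F P (stopped M (Tn n))).

(* local martingale on [0, T]: the process stopped at the deterministic time T *)
Definition local_martingale_on (F : R -> set (set Omega)) (P : probability Omega R)
    (T : R) (M : R -> Omega -> R) : Prop :=
  local_martingale F P (stopped M (fun _ => T%:E)).

(* X^{tau-} = X 1_[0,tau) + X_{tau-} 1_[tau,oo) *)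
Definition prestopped (X : R -> Omega -> R) (tau : Omega -> \bar R) : R -> Omega -> R :=
  fun t w => if (t%:E < tau w)%E then X t w
             else lim (X s w @[s --> (fine (tau w))^'-]).

Definition pred_domain : set (R * Omega) := [set p | 0 <= p.1].
Definition predictable_rectangles (F : R -> set (set Omega)) : set (set (R * Omega)) :=
  [set C | exists B, F 0 B /\ C = [set p | p.1 = 0 /\ B p.2]] `|`
  [set C | exists s t B, [/\ 0 <= s, s <= t, F s B &
                           C = [set p | s < p.1 <= t /\ B p.2]]].
Definition predictable (F : R -> set (set Omega)) (g : R -> Omega -> R) : Prop :=
  forall B : set R, measurable B ->
    <<s pred_domain, predictable_rectangles F >>
      (pred_domain `&` [set p | B (g p.1 p.2)]).

Definition compensator_ext (gamma : R -> Omega -> R) (tau : Omega -> \bar R)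
    (t : R) (w : Omega) : \bar R :=
  \int[lebesgue_measure]_(s in [set s : R | (0 < s <= t)%R])
     ((gamma s w)%:E * (\1_[set s : R | (s%:E <= tau w)%E] s : R)%:E)%E.

Definition has_intensity (G : R -> set (set Omega)) (Q : probability Omega R)
    (tau : Omega -> \bar R) (gamma : R -> Omega -> R) : Prop :=
  {ae Q, forall w, forall t, 0 <= t -> compensator_ext gamma tau t w \is a fin_num} /\
  local_martingale G Q
    (fun t w => (\1_[set w' | (tau w' <= t%:E)%E] w : R) - fine (compensator_ext gamma tau t w)).

Definition condition_C (F G : R -> set (set Omega)) (Q : probability Omega R)
    (tau : Omega -> \bar R) (T : R) : Prop :=
  [/\ exists gamma : R -> Omega -> R,
        (forall t w, 0 <= gamma t w) /\ predictable F gamma /\ has_intensity G Q tau gamma,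
      (forall S : Omega -> R,
         is_condexp Q (F T) (fun w => (\1_[set w' | (T%:E < tau w')%E] w : R)) S ->
         {ae Q, forall w, 0 < S w}) &
      exists P : probability Omega R,
        (forall A, F T A -> (P A = 0%E <-> Q A = 0%E)) /\
        (forall X, local_martingale_on F P T X ->
                   local_martingale_on G Q T (prestopped X tau))].

End Stoch.

From HB Require Import structures.
From mathcomp Require Import all_boot all_order all_algebra.
From mathcomp Require Import all_classical all_reals all_analysis.
From mathcomp Require Import measurable_realfun.
Import Order.TTheory GRing.Theory Num.Theory.
Import numFieldNormedType.Exports.
Local Open Scope classical_set_scope.
Local Open Scope ring_scope.

(** For rational [q >= 0], the [G_q]-event [{theta_n <= q}] coincides on
    [{q < tau}] with an event [B n q] of [F_q].  The times
    [sigma_n = inf {q rational in [0, T) | B m q for all m <= n}]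
    are nondecreasing, are [F]-stopping times by right-continuity, agree with
    [theta_n] up to [min T tau], and equal [+oo] as soon as they reach [T].
    On the [F_T]-event [A = \bigcap_n {sigma_n < T}] every [theta_n] stays
    below [T] wherever [T < tau], so [A `&` {T < tau}] is null because
    [theta_n] tends to infinity.  Since [Q(T < tau | F_T) > 0] a.s. by
    condition (C), [A] is null, and off [A] the [sigma_n] are eventually
    [+oo]. *)

Section sub_sigma_algebra_measure.
Context {d} {Omega : measurableType d} {R : realType} {G : set (set Omega)}.

Definition sub_probability (P : probability Omega R)
  (subG : <<s G >> `<=` measurable) : set (g_sigma_algebraType G) -> \bar R :=
  fun A => P A.

Lemma sub_probability_sigma_additive P subG :
  semi_sigma_additive (@sub_probability P subG).
Proof.
move=> A mA tA mUA; apply: (@measure_semi_sigma_additive _ _ _ P) => //.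
- by move=> n; apply: subG; exact: mA.
- exact: subG.
Qed.

HB.instance Definition _ P subG := isMeasure.Build _ _ _ (@sub_probability P subG)
  (measure0 P) (fun A => measure_ge0 P A) (@sub_probability_sigma_additive P subG).

HB.instance Definition _ P subG :=
  Measure_isProbability.Build _ _ _ (@sub_probability P subG) (probability_setT P).

Definition sub_charge (nu : charge Omega R)
  (subG : <<s G >> `<=` measurable) : set (g_sigma_algebraType G) -> \bar R :=
  fun A => nu A.

Lemma sub_charge_fin_num nu subG A :
  measurable A -> @sub_charge nu subG A \is a fin_num.
Proof. by move=> mA; apply: fin_num_measure; exact: subG. Qed.

Lemma sub_charge_sigma_additive nu subG :
  semi_sigma_additive (@sub_charge nu subG).
Proof.
move=> A mA tA mUA; apply: (@charge_semi_sigma_additive _ _ _ nu) => //.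
- by move=> n; apply: subG; exact: mA.
- exact: subG.
Qed.

HB.instance Definition _ nu subG := isCharge.Build _ _ _ (@sub_charge nu subG)
  (charge0 nu) (@sub_charge_fin_num nu subG) (@sub_charge_sigma_additive nu subG).

End sub_sigma_algebra_measure.

Lemma sigma_algebra_bigcap_in (T : pointedType) (G : set (set T)) (I : set nat)
    (A : (set T)^nat) :
  sigma_algebra setT G -> (forall k, I k -> G (A k)) -> G (\bigcap_(k in I) A k).
Proof.
move=> sG GA; rewrite -(sigma_algebra_id sG).
apply: (@bigcap_measurableType _ (g_sigma_algebraType G)) => k Ik.
by rewrite /measurable /= sigma_algebra_id //; exact: GA.
Qed.

Lemma sigma_algebra_bigcup_rat (T : pointedType) (G : set (set T)) (I : set rat)
    (A : rat -> set T) :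
  sigma_algebra setT G -> (forall q, I q -> G (A q)) -> G (\bigcup_(q in I) A q).
Proof.
move=> sG GA; rewrite -(sigma_algebra_id sG) bigcup_mkcond.
apply: (@bigcupT_measurable_rat _ (g_sigma_algebraType G)) => q.
case: ifPn => [/set_mem Iq|_]; last exact: measurable0.
by rewrite /measurable /= sigma_algebra_id //; exact: GA.
Qed.

Section conditional_expectation.
Context {d} {Omega : measurableType d} {R : realType} (Q : probability Omega R).
Context {G : set (set Omega)}.
Hypotheses (sG : sigma_algebra setT G) (subG : G `<=` measurable).

Lemma condexp_exists (X : Omega -> R) :
  Q.-integrable setT (fun w => (X w)%:E) ->
  exists Y, is_condexp Q G X Y.
Proof.
move=> intX.
have subG' : <<s G >> `<=` @measurable _ Omega by rewrite sigma_algebra_id.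
pose nu : {charge set g_sigma_algebraType G -> \bar R} :=
  sub_charge (induced_charge intX) subG'.
pose mu : {sigma_finite_measure set g_sigma_algebraType G -> \bar R} :=
  sub_probability Q subG'.
have nu_mu : nu `<< mu.
  apply/null_content_dominatesP => A mA muA0.
  apply: null_set_integral => //; first exact: (subG' A).
  exact: measurable_funS measurableT (subsetT _) (measurable_int _ intX).
pose f := Radon_Nikodym nu mu.
have f_fin x : f x \is a fin_num := Radon_Nikodym_fin_num x nu_mu.
have mu_intf : mu.-integrable setT f := Radon_Nikodym_integrable nu_mu.
have mf := measurable_int _ mu_intf.
pose embed (x : Omega) : g_sigma_algebraType G := x.
have m_embed : measurable_fun setT embed.
  by move=> _ B mB; rewrite setTI; exact: (subG' B).
have muE : pushforward Q embed = mu by [].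
have Q_intf : Q.-integrable setT (f \o embed).
  apply/integrableP; split; first exact: measurableT_comp mf m_embed.
  move/integrableP : mu_intf => [_]; rewrite -muE ge0_integral_pushforward //.
  exact: measurableT_comp.
exists (fun w => fine (f w)); split; [|split].
- move=> B mB; rewrite -(sigma_algebra_id sG) -[_ @^-1` _]setTI.
  have m_fine_f : measurable_fun setT (fun x => fine (f x)) by exact: measurableT_comp.
  exact: m_fine_f measurableT B mB.
- have -> : (fun w => (fine (f w))%:E) = f \o embed by apply/funext => w; rewrite /= fineK.
  exact: Q_intf.
- move=> B GB.
  have mB : G.-sigma.-measurable B by rewrite /measurable /= (sigma_algebra_id sG).
  transitivity (\int[Q]_(w in B) f w)%E.
    by apply: eq_integral => w _; rewrite fineK.
  transitivity (\int[mu]_(w in B) f w)%E.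
    rewrite -muE integral_pushforward //.
    by apply: integrableS Q_intf => //; exact: subG.
  by rewrite -(Radon_Nikodym_integral nu_mu mB).
Qed.

Lemma condexp_indic_gt0_null (Z A : set Omega) : measurable Z ->
  (forall S, is_condexp Q G (fun w => (\1_Z w : R)) S -> {ae Q, forall w, 0 < S w}) ->
  G A -> Q (A `&` Z) = 0%E -> Q A = 0%E.
Proof.
move=> mZ S_gt0 GA QAZ0.
(* A version [S] of [Q(Z | G)] integrates to [Q (A `&` Z) = 0] over [A] and is
   positive a.s., so [A] is covered by two null sets. *)
have mA : measurable A := subG _ GA.
have [S condS] := condexp_exists _ (integrable_indic Q mZ).
have [N [mN QN0 S_gt0_off_N]] := S_gt0 S condS.
have [_ [intS intSE]] := condS.
have mS : measurable_fun setT (fun w => (S w)%:E) := measurable_int _ intS.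
have intS_A0 : (\int[Q]_(w in A) (S w)%:E = 0)%E.
  by rewrite intSE // integral_indic // setIC.
have int_absS_A0 : (\int[Q]_(w in A) `|(S w)%:E| = 0)%E.
  rewrite -intS_A0; apply: ae_eq_integral => //.
  - by apply: measurableT_comp => //; exact: measurable_funTS.
  - exact: measurable_funTS.
  - exists N; split => // w /= Sw; apply: S_gt0_off_N => /= S_gt0w; apply: Sw => _.
    by rewrite ger0_norm // ltW.
have [N' [mN' QN'0 S0_off_N']] :=
  (ae_eq_integral_abs _ mA (measurable_funTS mS)).1 int_absS_A0.
apply: (@subset_measure0 _ _ _ Q A (N `|` N')) => //; first exact: measurableU.
- move=> w Aw; have [Nw|Nw] := pselect (N w); first by left.
  right; apply: S0_off_N' => /= S0w.
  have S_gt0w : 0 < S w by apply: contra_notP Nw => h; exact: S_gt0_off_N.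
  by move: (S0w Aw) => [] /eqP; rewrite gt_eqF.
- exact: (etrans (measureU0 mN mN' QN'0) QN0).
Qed.

End conditional_expectation.

Lemma EFin_lt_rat (R : realType) (r : R) (m : \bar R) :
  (r%:E < m)%E -> exists2 q : rat, r < ratr q & ((ratr q)%:E < m)%E.
Proof.
case: m => [m||] //= rm.
- by have [q] := rat_in_itvoo rm; rewrite in_itv /= => /andP[rq qm]; exists q.
- have r1 : r < r + 1 by rewrite ltrDl.
  have [q] := rat_in_itvoo r1; rewrite in_itv /= => /andP[rq _].
  by exists q => //; exact: ltry.
Qed.

Lemma ereal_inf_rat_min (R : realType) (P : rat -> Prop) (x a : \bar R) :
  (0 <= x)%E ->
  (forall q, 0 <= (ratr q : R) -> ((ratr q)%:E < a)%E ->
     P q <-> (x <= (ratr q)%:E)%E) ->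
  Order.min (ereal_inf [set (ratr q)%:E | q in [set q | 0 <= (ratr q : R) /\ P q]]) a
  = Order.min x a.
Proof.
move=> x0 xP; set S := [set _ | _ in _].
have [ax|xa] := leP a x.
  apply/min_idPr/le_ereal_inf_tmp => _ [q [q0 Pq] <-].
  rewrite leNgt; apply/negP => qa.
  by have := lt_le_trans qa ax; rewrite ltNge (xP q q0 qa).1.
suff -> : ereal_inf S = x by apply/min_idPl; exact: ltW.
apply/le_anti/andP; split; last first.
  apply: le_ereal_inf_tmp => _ [q [q0 Pq] <-].
  have [qa|aq] := ltP (ratr q)%:E a; first exact: (xP q q0 qa).1.
  exact: le_trans (ltW xa) aq.
have xfin : x \is a fin_num by rewrite ge0_fin_numE // (lt_le_trans xa (leey a)).
rewrite -(fineK xfin); apply/lee_addgt0Pr => e e0.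
have [|q xq qlt] := @EFin_lt_rat _ (fine x) (Order.min a (fine x + e)%:E).
  by rewrite lt_min lte_fin ltrDl e0 andbT fineK.
move: qlt; rewrite lt_min lte_fin => /andP[qa qe].
have q0 : 0 <= (ratr q : R) by rewrite (le_trans _ (ltW xq)) // fine_ge0.
apply: (@le_trans _ _ (ratr q)%:E); last by rewrite -EFinD lee_fin ltW.
apply: ereal_inf_lbound; exists q => //; split => //.
by apply/(xP q q0 qa); rewrite -(fineK xfin) lee_fin ltW.
Qed.

Section right_continuous_filtration.
Context {R : realType} {d : measure_display} {Omega : measurableType d}.
Context {F : R -> set (set Omega)}.
Hypothesis F_sigma : forall t, 0 <= t -> sigma_algebra setT (F t).
Hypothesis F_mono : forall s t, 0 <= s -> s <= t -> F s `<=` F t.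
Hypothesis F_rc : forall t, 0 <= t -> forall A, (forall u, t < u -> F u A) -> F t A.

Lemma optional_stopping_time (th : Omega -> \bar R) :
  (forall w, (0 <= th w)%E) ->
  (forall v, 0 < v -> F v [set w | (th w < v%:E)%E]) -> stopping_time F th.
Proof.
move=> th0 th_lt; split => // t t0; apply: F_rc => // u tu.
have u0 : 0 <= u := ltW (le_lt_trans t0 tu).
have [K tKu] := ltr_add_invr tu.
have inv_le m n : ((m + n).+1%:R^-1 : R) <= n.+1%:R^-1.
  by rewrite lef_pV2 ?posrE ?ltr0Sn // ler_nat ltnS leq_addl.
have -> : [set w | (th w <= t%:E)%E] =
    \bigcap_k [set w | (th w < (t + (k + K).+1%:R^-1)%:E)%E].
  apply/seteqP; split => w /=.
  - move=> th_le k _; apply: le_lt_trans th_le _.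
    by rewrite lte_fin ltrDl invr_gt0 ltr0Sn.
  - move=> th_lt_k; apply/lee_addgt0Pr => e e0.
    have [k ke] := ltr_add_invr e0.
    apply: le_trans (ltW (th_lt_k k I)) _.
    rewrite -EFinD lee_fin lerD2l; apply: le_trans (ltW ke).
    by rewrite add0r addnC; exact: inv_le.
apply: sigma_algebra_bigcap_in (F_sigma _ u0) _ => k _.
have tk0 : 0 < t + (k + K).+1%:R^-1 by rewrite ltr_wpDl // invr_gt0 ltr0Sn.
apply: F_mono _ _ (ltW tk0) _ _ (th_lt _ tk0).
by apply: le_trans (ltW tKu); rewrite lerD2l inv_le.
Qed.

Section F_version_of_G_stopping_times.
Context {tau : Omega -> \bar R} {theta : nat -> Omega -> \bar R}.
Variables (T : R) (B : nat -> rat -> set Omega).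
Hypothesis theta_ge0 : forall n w, (0 <= theta n w)%E.
Hypothesis theta_mono : forall n w, (theta n w <= theta n.+1 w)%E.
Hypothesis B_F : forall n q, 0 <= (ratr q : R) -> F (ratr q) (B n q).
Hypothesis B_trace : forall n q w, 0 <= (ratr q : R) -> ((ratr q)%:E < tau w)%E ->
  B n q w <-> (theta n w <= (ratr q)%:E)%E.

Definition F_trace n q : set Omega := \bigcap_(m in [set m | (m <= n)%N]) B m q.

Definition sigma n w : \bar R :=
  ereal_inf [set (ratr q)%:E | q in [set q : rat |
    0 <= (ratr q : R) /\ ratr q < T /\ F_trace n q w]].

Lemma F_trace_F n q : 0 <= (ratr q : R) -> F (ratr q) (F_trace n q).
Proof.
by move=> q0; apply: sigma_algebra_bigcap_in (F_sigma _ q0) _ => m _; exact: B_F.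
Qed.

Lemma F_traceE n q w : 0 <= (ratr q : R) -> ((ratr q)%:E < tau w)%E ->
  F_trace n q w <-> (theta n w <= (ratr q)%:E)%E.
Proof.
move=> q0 qtau; split => [Dq|theta_le m mn].
  by apply/(B_trace _ _ _ q0 qtau); exact: Dq n (leqnn n).
apply/(B_trace _ _ _ q0 qtau); apply: le_trans theta_le.
have /nondecreasing_seqP theta_homo : forall k, (theta k w <= theta k.+1 w)%E by [].
exact: theta_homo.
Qed.

Lemma sigma_ge0 n w : (0 <= sigma n w)%E.
Proof. by apply: le_ereal_inf_tmp => _ [q [q0 _] <-]; rewrite lee_fin. Qed.

Lemma sigma_le m n w : (m <= n)%N -> (sigma m w <= sigma n w)%E.
Proof.
move=> mn; apply: ereal_inf_le_tmp => _ [q [q0 [qT Dq]] <-]; exists q => //.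
by do 2!split => //; move=> k km; apply: Dq; exact: leq_trans mn.
Qed.

Lemma sigma_lt_F n v : 0 <= v -> F v [set w | (sigma n w < v%:E)%E].
Proof.
move=> v0.
have -> : [set w | (sigma n w < v%:E)%E] = \bigcup_(q in
    [set q : rat | [/\ 0 <= (ratr q : R), ratr q < T & ratr q < v]]) F_trace n q.
  apply/seteqP; split => w /=.
  - move/ereal_inf_lt => [_ [q [q0 [qT Dq]] <-]]; rewrite lte_fin => qv.
    by exists q.
  - move=> [q [q0 qT qv] Dq]; rewrite (@le_lt_trans _ _ (ratr q)%:E) ?lte_fin //.
    by apply: ereal_inf_lbound; exists q.
apply: sigma_algebra_bigcup_rat (F_sigma _ v0) _ => q [q0 _ qv].
exact: F_mono _ _ q0 (ltW qv) _ (F_trace_F n _ q0).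
Qed.

Lemma sigma_stopping_time n : stopping_time F (sigma n).
Proof.
apply: optional_stopping_time => [w|v v0]; first exact: sigma_ge0.
exact: sigma_lt_F (ltW v0).
Qed.

Lemma sigma_min_tau n w :
  Order.min (Order.min (theta n w) T%:E) (tau w) =
  Order.min (Order.min (sigma n w) T%:E) (tau w).
Proof.
rewrite -!minA; symmetry; apply: ereal_inf_rat_min => // q q0.
rewrite lt_min lte_fin => /andP[qT qtau]; rewrite -F_traceE //.
by split=> [[]|Dq].
Qed.

Lemma sigma_ge_T n w : (T%:E <= sigma n w)%E -> sigma n w = +oo%E.
Proof.
move=> T_le; apply/ereal_inf_pinfty => _ [q [q0 [qT Dq]] <-].
have : (sigma n w <= (ratr q)%:E)%E by apply: ereal_inf_lbound; exists q.
by move/(le_trans T_le); rewrite lee_fin leNgt qT.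
Qed.

Lemma theta_lt_T n w : (sigma n w < T%:E)%E -> (T%:E < tau w)%E ->
  (theta n w < T%:E)%E.
Proof.
move=> sT Ttau; have : (Order.min (Order.min (theta n w) T%:E) (tau w) < T%:E)%E.
  by rewrite sigma_min_tau !gt_min sT.
by rewrite !gt_min ltxx orbF (lt_gtF Ttau) orbF.
Qed.

Lemma sigma_cvgey w : (exists n, T%:E <= sigma n w)%E ->
  (fun n => sigma n w) @ \oo --> +oo%E.
Proof.
move=> [n T_le]; apply/cvgeyPge => M; exists n => // m /= nm.
by rewrite (@sigma_ge_T m) ?leey // (le_trans T_le) // sigma_le.
Qed.

Lemma sigma_cvgey_ae (Q : probability Omega R) : 0 <= T ->
  F T `<=` measurable -> measurable [set w | (T%:E < tau w)%E] ->
  (forall S, is_condexp Q (F T) (fun w => (\1_[set w' | (T%:E < tau w')%E] w : R)) S ->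
     {ae Q, forall w, 0 < S w}) ->
  {ae Q, forall w, (fun n => theta n w) @ \oo --> +oo%E} ->
  {ae Q, forall w, (fun n => sigma n w) @ \oo --> +oo%E}.
Proof.
move=> T0 FT_meas mZ S_gt0 [N [mN QN0 theta_cvg]].
pose A := \bigcap_n [set w | (sigma n w < T%:E)%E].
have FA : F T A.
  by apply: sigma_algebra_bigcap_in (F_sigma _ T0) _ => n _; exact: sigma_lt_F.
have QA0 : Q A = 0%E.
  apply: (condexp_indic_gt0_null Q (F_sigma _ T0) FT_meas _ _ mZ S_gt0 FA).
  apply: (subset_measure0 (measurableI _ _ (FT_meas _ FA) mZ) mN _ QN0).
  move=> w [Aw Ttau]; apply: theta_cvg => /cvgeyPge/(_ T) [K _ /(_ K (leqnn K))].
  by rewrite leNgt theta_lt_T //; exact: Aw.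
exists A; split => //; first exact: FT_meas.
move=> w /= sigma_not_cvg; apply: contrapT => Aw; apply: sigma_not_cvg.
apply: sigma_cvgey; apply: contrapT => sigma_lt; apply: Aw => n _.
by rewrite /= ltNge; apply/negP => T_le; apply: sigma_lt; exists n.
Qed.

End F_version_of_G_stopping_times.
End right_continuous_filtration.

Lemma F_trace_choice {R : realType} {d} {Omega : measurableType d}
    {G F : R -> set (set Omega)} {tau : Omega -> \bar R}
    {theta : nat -> Omega -> \bar R} :
  (forall t, 0 <= t -> forall A, G t A -> exists A', F t A' /\
     A `&` [set w | (t%:E < tau w)%E] = A' `&` [set w | (t%:E < tau w)%E]) ->
  (forall n, stopping_time G (theta n)) ->
  exists B : nat -> rat -> set Omega,
    (forall n q, 0 <= (ratr q : R) -> F (ratr q) (B n q)) /\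
    (forall n q w, 0 <= (ratr q : R) -> ((ratr q)%:E < tau w)%E ->
       B n q w <-> (theta n w <= (ratr q)%:E)%E).
Proof.
move=> G_trace theta_stop.
have /choice[B B_spec] : forall nq : nat * rat, exists A : set Omega,
    0 <= (ratr nq.2 : R) -> F (ratr nq.2) A /\
    [set w | (theta nq.1 w <= (ratr nq.2)%:E)%E] `&` [set w | ((ratr nq.2)%:E < tau w)%E] =
    A `&` [set w | ((ratr nq.2)%:E < tau w)%E].
  move=> [n q] /=; have [q0|q0] := leP 0 (ratr q : R); last by exists set0.
  by have [A' A'_trace] := G_trace _ q0 _ ((theta_stop n).2 _ q0); exists A'.
exists (fun n q => B (n, q)); split => [n q q0|n q w q0 qtau].
  exact: (B_spec (n, q) q0).1.
have [_ /seteqP[thetaB Btheta]] := B_spec (n, q) q0.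
split => [Bw|theta_le]; first by have [] := Btheta w (conj Bw qtau).
by have [] := thetaB w (conj theta_le qtau).
Qed.

Theorem lemma5p1 (R : realType) (d : measure_display) (Omega : measurableType d)
  (Q : probability Omega R) (G F : R -> set (set Omega))
  (tau : Omega -> \bar R) (T : R)
  (HG : usual_conditions Q G) (HF : usual_conditions Q F)
  (HFG : subfiltration F G)
  (Htau : stopping_time G tau) (Htau_pos : forall w, (0 < tau w)%E)
  (Hred : forall t, 0 <= t -> forall B, G t B ->
            exists B', F t B' /\
              B `&` [set w | (t%:E < tau w)%E] = B' `&` [set w | (t%:E < tau w)%E])
  (HT : 0 < T)
  (HC : condition_C F G Q tau T)
  (theta : nat -> Omega -> \bar R)
  (Htheta : forall n, stopping_time G (theta n))
  (Htheta_mono : forall n w, (theta n w <= theta n.+1 w)%E)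
  (Htheta_inf : {ae Q, forall w, (fun n => theta n w) @ \oo --> +oo%E}) :
  exists sigma : nat -> Omega -> \bar R,
    [/\ forall n, stopping_time F (sigma n),
        forall n w, (sigma n w <= sigma n.+1 w)%E,
        {ae Q, forall w, (fun n => sigma n w) @ \oo --> +oo%E} &
        forall n, {ae Q, forall w,
          Order.min (Order.min (theta n w) T%:E) (tau w) =
          Order.min (Order.min (sigma n w) T%:E) (tau w)}].
Proof.
case: HF => [[F_filt F_mono] [F_rc _]].
have F_sigma t (t0 : 0 <= t) := (F_filt t t0).1.
have T0 : 0 <= T := ltW HT.
have theta_ge0 n w : (0 <= theta n w)%E := (Htheta n).1 w.
have [B [B_F B_trace]] := F_trace_choice Hred Htheta.
have mZ : measurable [set w | (T%:E < tau w)%E].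
  have [[G_filt _] _] := HG.
  rewrite (_ : [set w | _] = ~` [set w | (tau w <= T%:E)%E]).
    exact/measurableC/(G_filt _ T0).2/(Htau.2 _ T0).
  by apply/seteqP; split => w /=; rewrite ltNge => /negP.
case: HC => _ S_gt0 _.
exists (sigma T B); split.
- exact: sigma_stopping_time F_sigma F_mono F_rc T B B_F.
- by move=> n w; exact: sigma_le.
- exact: (sigma_cvgey_ae F_sigma F_mono T B theta_ge0 Htheta_mono B_F B_trace Q T0
    (F_filt _ T0).2 mZ S_gt0 Htheta_inf).
- move=> n; apply: aeW => w.
  exact: sigma_min_tau T B theta_ge0 Htheta_mono B_trace n w.
Qed.
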